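(* In the double-option game, let $(b,r)$ with $b,r\ge0$ be any proposal and let bidder 2 hold any belief (probability distribution) about $v_1$ on $[\underline v_1,\bar v_1]$ after observing $(b,r)$. Then bidder 2's best response can be described by a pair of critical values $(v_2^b,v_2^r)$ satisfying $$v_2^b\le \min\{b+r,\bar v_2\}\le v_2^r\le \bar v_2,$$ such that type $v_2$ accepts the bribe $b$ if $v_2\le v_2^b$, rejects the proposal if $v_2^b<v_2<v_2^r$, and accepts the request $r$ if $v_2\ge v_2^r$.
   Context: Two risk-neutral bidders $i=1,2$ compete for one indivisible object. Bidder $i$'s valuation $v_i$ is private, drawn independently from a cdf $F_i$ on $[\underline v_i,\bar v_i]$ with $0\le \underline v_i<\bar v_i<\infty$, with continuous density $0<f_i<\infty$ on that interval. Double-option game: bidder 1 learns $v_1$ and proposes $(b,r)$, $b,r\ge 0$. Bidder 2 learns $v_2$, observes $(b,r)$ and either accepts the bribe (payoffs $(v_1-b,\ b)$ to bidders 1 and 2), accepts the request (payoffs $(r,\ v_2-r)$), or rejects, in which case both bid truthfully in a second-price auction without reserve price (payoffs $((v_1-v_2)^+,\ (v_2-v_1)^+)$). A best response of bidder 2 to a belief is a choice for each type $v_2$ maximizing her expected payoff given the belief about $v_1$. *)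

From Stdlib Require Import Reals Lra.
Open Scope R_scope.

(* A belief of bidder 2 about v1 : a probability distribution on [lo1,hi1].
   Without measure theory we represent it (Riesz representation on a compact
   interval) by its expectation operator: a positive, normalized, linear
   functional on functions that are continuous on [lo1,hi1]. *)
Definition cont_on (lo hi : R) (f : R -> R) : Prop :=
  forall x, lo <= x <= hi -> continuity_pt f x.

Record belief (lo1 hi1 : R) : Type := {
  Ex : (R -> R) -> R;
  Ex_add : forall f g, cont_on lo1 hi1 f -> cont_on lo1 hi1 g ->
      Ex (fun x => f x + g x) = Ex f + Ex g;
  Ex_scal : forall c f, cont_on lo1 hi1 f -> Ex (fun x => c * f x) = c * Ex f;
  Ex_pos : forall f, cont_on lo1 hi1 f ->
      (forall x, lo1 <= x <= hi1 -> 0 <= f x) -> 0 <= Ex f;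
  Ex_one : Ex (fun _ => 1) = 1
}.

Inductive action := AcceptBribe | Reject | AcceptRequest.

Definition payoff2 {lo1 hi1} (mu : belief lo1 hi1) (b r v2 : R) (a : action) : R :=
  match a with
  | AcceptBribe => b
  | AcceptRequest => v2 - r
  | Reject => Ex lo1 hi1 mu (fun v1 => Rmax (v2 - v1) 0)
  end.

Definition optimal {lo1 hi1} (mu : belief lo1 hi1) (b r v2 : R) (a : action) : Prop :=
  forall a', payoff2 mu b r v2 a' <= payoff2 mu b r v2 a.

Definition cutoff_strategy (vb vr v2 : R) : action :=
  if Rle_dec v2 vb then AcceptBribe
  else if Rlt_dec v2 vr then Reject else AcceptRequest.

(* Rejecting pays type v2 the value R(v2) = E[(v2 - v1)^+], which is
   nondecreasing and 1-Lipschitz in v2.  Hence the three pairwise payoff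
   gains R(v2) - b (reject over bribe), v2 - r - R(v2) (request over reject)
   and v2 - r - b (request over bribe) are all nondecreasing in v2.  Each of
   the first two has a zero crossing by the intermediate value theorem; once
   clamped to [., min(b+r, hi2)] and [min(b+r, hi2), hi2] they are the
   critical values vb and vr. *)

From Stdlib Require Import Reals Ranalysis5 Lra.
Open Scope R_scope.

Definition nondecreasing_nonexpansive (g : R -> R) : Prop :=
  forall v w, v <= w -> 0 <= g w - g v <= w - v.

Lemma nonexpansive_continuity (g : R -> R) :
  (forall x y, Rabs (g x - g y) <= Rabs (x - y)) -> continuity g.
Proof.
  intros Hg x eps Heps. exists eps. split; [lra|].
  intros y [_ Hy]. simpl in *. unfold R_dist in *.
  specialize (Hg y x). lra.
Qed.

Lemma nondecreasing_nonexpansive_continuity (g : R -> R) :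
  nondecreasing_nonexpansive g -> continuity g.
Proof.
  intros Hg. apply nonexpansive_continuity. intros x y.
  destruct (Rle_dec x y) as [Hxy|Hyx].
  - specialize (Hg x y Hxy). rewrite !Rabs_left1; lra.
  - specialize (Hg y x ltac:(lra)). rewrite !Rabs_right; lra.
Qed.

Lemma nondecreasing_nonexpansive_compl (g : R -> R) :
  nondecreasing_nonexpansive g -> nondecreasing_nonexpansive (fun v => v - g v).
Proof. intros Hg v w Hvw. specialize (Hg v w Hvw). lra. Qed.

Lemma nondecreasing_nonexpansive_increasing (g : R -> R) :
  nondecreasing_nonexpansive g -> increasing g.
Proof. intros Hg v w Hvw. specialize (Hg v w Hvw). lra. Qed.

Lemma increasing_continuity_crossing (g : R -> R) (c x0 x1 : R) :
  increasing g -> continuity g -> x0 <= x1 ->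
  exists s, x0 <= s <= x1 /\
    (x0 < s -> forall v, v <= s -> g v <= c) /\
    (s < x1 -> forall v, s <= v -> c <= g v).
Proof.
  intros Hg Hcont Hx.
  destruct (Rle_dec c (g x0)) as [Hc0|Hc0].
  { exists x0. split; [lra|split; [lra|]].
    intros _ v Hv. specialize (Hg x0 v Hv). lra. }
  destruct (Rle_dec (g x1) c) as [Hc1|Hc1].
  { exists x1. split; [lra|split; [|lra]].
    intros _ v Hv. specialize (Hg v x1 Hv). lra. }
  destruct (f_interv_is_interv g x0 x1 c) as [s [Hs Hgs]].
  - destruct (Req_dec x0 x1) as [<-|]; lra.
  - lra.
  - intros x _. apply Hcont.
  - exists s. split; [exact Hs|split].
    + intros _ v Hv. specialize (Hg v s Hv). lra.
    + intros _ v Hv. specialize (Hg s v Hv). lra.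
Qed.

Lemma nondecreasing_nonexpansive_crossing (g : R -> R) (c x0 x1 : R) :
  nondecreasing_nonexpansive g -> x0 <= x1 ->
  exists s, x0 <= s <= x1 /\
    (x0 < s -> forall v, v <= s -> g v <= c) /\
    (s < x1 -> forall v, s <= v -> c <= g v).
Proof.
  intros Hg. apply increasing_continuity_crossing.
  - exact (nondecreasing_nonexpansive_increasing g Hg).
  - exact (nondecreasing_nonexpansive_continuity g Hg).
Qed.

Definition payoff_with (q b r v2 : R) (a : action) : R :=
  match a with
  | AcceptBribe => b
  | AcceptRequest => v2 - r
  | Reject => q
  end.

Definition best_among (q b r v2 : R) (a : action) : Prop :=
  forall a', payoff_with q b r v2 a' <= payoff_with q b r v2 a.

Lemma best_bribe q b r v2 : q <= b -> v2 - r <= b -> best_among q b r v2 AcceptBribe.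
Proof. intros Hq Hv [] ; simpl; lra. Qed.

Lemma best_reject q b r v2 : b <= q -> v2 - r <= q -> best_among q b r v2 Reject.
Proof. intros Hq Hv [] ; simpl; lra. Qed.

Lemma best_request q b r v2 : b <= v2 - r -> q <= v2 - r -> best_among q b r v2 AcceptRequest.
Proof. intros Hq Hv [] ; simpl; lra. Qed.

Section Cutoffs.

Variables (Q : R -> R) (b r hi x0 : R).
Hypothesis HQ : nondecreasing_nonexpansive Q.
Hypothesis Q_x0 : Q x0 <= b.

Lemma bribe_cutoff_exists :
  exists vb, vb <= Rmin (b + r) hi /\
    (forall v, v <= vb -> Q v <= b) /\
    (vb < Rmin (b + r) hi -> forall v, vb <= v -> b <= Q v).
Proof.
  set (m := Rmin (b + r) hi).
  destruct (nondecreasing_nonexpansive_crossing Q b (Rmin x0 m) m HQ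
              (Rmin_r x0 m)) as [s [Hs [Hlow Hhigh]]].
  exists s. split; [lra|split; [|exact Hhigh]].
  intros v Hv. destruct (Rle_lt_dec s (Rmin x0 m)) as [Hs0|Hs0].
  - pose proof (Rmin_l x0 m). pose proof (nondecreasing_nonexpansive_increasing Q HQ v x0 ltac:(lra)).
    lra.
  - exact (Hlow Hs0 v Hv).
Qed.

Lemma cutoff_strategy_best :
  exists vb vr,
    vb <= Rmin (b + r) hi /\ Rmin (b + r) hi <= vr /\ vr <= hi /\
    forall v, v <= hi -> (v < hi \/ vr < hi) ->
      best_among (Q v) b r v (cutoff_strategy vb vr v).
Proof.
  destruct bribe_cutoff_exists as [vb [Hvb [Qle Qge]]].
  destruct (nondecreasing_nonexpansive_crossing (fun v => v - Q v) r
              (Rmin (b + r) hi) hi (nondecreasing_nonexpansive_compl Q HQ)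
              (Rmin_r (b + r) hi)) as [vr [Hvr [Dle Dge]]].
  set (m := Rmin (b + r) hi) in *.
  assert (Hm : m <= b + r /\ m <= hi /\ (m = b + r \/ m = hi)).
  { unfold m, Rmin. destruct Rle_dec; lra. }
  exists vb, vr. split; [exact Hvb|split; [lra|split; [lra|]]].
  intros v Hv Hedge. unfold cutoff_strategy.
  destruct (Rle_dec v vb) as [Hb|Hb]; [|destruct (Rlt_dec v vr) as [Hr|Hr]].
  - apply best_bribe; [apply Qle|]; lra.
  - destruct (Rlt_le_dec vb m) as [Hbm|Hbm].
    + pose proof (Qge Hbm v ltac:(lra)).
      apply best_reject; [lra|].
      destruct (Rle_lt_dec v m); [lra|].
      pose proof (Dle ltac:(lra) v ltac:(lra)). lra.
    + pose proof (Dle ltac:(lra) v ltac:(lra)).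
      apply best_reject; lra.
  - (* When vr = hi, v - Q v may stay below r up to hi: the type v = hi is
       then excluded by hypothesis. *)
    assert (Hvr_hi : vr < hi) by lra.
    pose proof (Dge Hvr_hi v ltac:(lra)).
    apply best_request; lra.
Qed.

End Cutoffs.

Section Belief.

Variables lo1 hi1 : R.
Variable mu : belief lo1 hi1.
Notation E := (Ex lo1 hi1 mu).

Lemma cont_on_continuity f : continuity f -> cont_on lo1 hi1 f.
Proof. intros Hf x _. apply Hf. Qed.

Lemma cont_on_const c : cont_on lo1 hi1 (fun _ => c).
Proof. apply cont_on_continuity, continuity_const. intros ? ?; reflexivity. Qed.

Lemma Ex_mono f g : cont_on lo1 hi1 f -> cont_on lo1 hi1 g ->
  (forall x, lo1 <= x <= hi1 -> f x <= g x) -> E f <= E g.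
Proof.
  intros Hf Hg Hfg.
  assert (Hf' : cont_on lo1 hi1 (fun x => -1 * f x)).
  { intros x Hx. apply continuity_pt_scal, Hf, Hx. }
  assert (Hdiff : cont_on lo1 hi1 (fun x => g x + -1 * f x)).
  { intros x Hx. apply continuity_pt_plus; [apply Hg|apply Hf']; exact Hx. }
  pose proof (Ex_pos _ _ mu _ Hdiff) as Hpos.
  rewrite (Ex_add _ _ mu _ _ Hg Hf'), (Ex_scal _ _ mu _ _ Hf) in Hpos.
  enough (0 <= E g + -1 * E f) by lra.
  apply Hpos. intros x Hx. specialize (Hfg x Hx). lra.
Qed.

Lemma Ex_const c : E (fun _ => c) = c.
Proof.
  assert (E (fun _ => c) = E (fun _ => c * 1)) as ->.
  { apply Rle_antisym; apply Ex_mono; try apply cont_on_const; intros; lra. }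
  rewrite (Ex_scal _ _ mu c _ (cont_on_const 1)), (Ex_one _ _ mu). ring.
Qed.

Lemma Ex_add_const c f : cont_on lo1 hi1 f -> E (fun x => c + f x) = c + E f.
Proof.
  intros Hf. rewrite (Ex_add _ _ mu (fun _ => c) f (cont_on_const c) Hf).
  now rewrite Ex_const.
Qed.

Definition reject_value (v2 : R) : R := E (fun v1 => Rmax (v2 - v1) 0).

Lemma best_among_optimal b r v2 a :
  best_among (reject_value v2) b r v2 a -> optimal mu b r v2 a.
Proof. intros Hbest a'. exact (Hbest a'). Qed.

Lemma positive_part_continuity v2 : continuity (fun v1 => Rmax (v2 - v1) 0).
Proof.
  apply nonexpansive_continuity. intros x y.
  unfold Rmax; repeat destruct Rle_dec; unfold Rabs; repeat destruct Rcase_abs; lra.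
Qed.

Lemma reject_value_nondecreasing_nonexpansive :
  nondecreasing_nonexpansive reject_value.
Proof.
  intros v w Hvw. unfold reject_value.
  pose proof (cont_on_continuity _ (positive_part_continuity v)) as Hv.
  pose proof (cont_on_continuity _ (positive_part_continuity w)) as Hw.
  assert (Hshift : E (fun x => Rmax (w - x) 0) <= E (fun x => (w - v) + Rmax (v - x) 0)).
  { apply Ex_mono; auto.
    - intros x Hx. apply continuity_pt_plus; [apply cont_on_const|apply Hv]; exact Hx.
    - intros x _. unfold Rmax; repeat destruct Rle_dec; lra. }
  rewrite Ex_add_const in Hshift by exact Hv.
  enough (E (fun x => Rmax (v - x) 0) <= E (fun x => Rmax (w - x) 0)) by lra.
  apply Ex_mono; auto. intros x _. unfold Rmax; repeat destruct Rle_dec; lra.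
Qed.

Lemma reject_value_lo1 : reject_value lo1 <= 0.
Proof.
  apply Rle_trans with (E (fun _ => 0)); [|rewrite Ex_const; lra].
  apply Ex_mono.
  - apply cont_on_continuity, positive_part_continuity.
  - apply cont_on_const.
  - intros x Hx. unfold Rmax; destruct Rle_dec; lra.
Qed.

End Belief.

Theorem lemma1 (lo1 hi1 lo2 hi2 : R)
  (h1 : 0 <= lo1) (h1' : lo1 < hi1) (h2 : 0 <= lo2) (h2' : lo2 < hi2)
  (b r : R) (hb : 0 <= b) (hr : 0 <= r) (mu : belief lo1 hi1) :
  exists vb vr : R,
    vb <= Rmin (b + r) hi2 /\ Rmin (b + r) hi2 <= vr /\ vr <= hi2 /\
    forall v2, lo2 <= v2 <= hi2 -> (v2 < hi2 \/ vr < hi2) ->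
      optimal mu b r v2 (cutoff_strategy vb vr v2).
Proof.
  assert (Hlo1 : reject_value lo1 hi1 mu lo1 <= b)
    by (pose proof (reject_value_lo1 lo1 hi1 mu); lra).
  destruct (cutoff_strategy_best (reject_value lo1 hi1 mu) b r hi2 lo1
              (reject_value_nondecreasing_nonexpansive lo1 hi1 mu) Hlo1)
    as [vb [vr [Hvb [Hvr [Hhi Hbest]]]]].
  exists vb, vr. split; [exact Hvb|split; [exact Hvr|split; [exact Hhi|]]].
  intros v2 [_ Hv2] Hedge. apply best_among_optimal, Hbest; assumption.
Qed.
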